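(* Let $\mathcal{T}_1$ be a channelled transition system with transition relation $R_1$ and let $\mathcal{T}$ be any channelled transition system. For every reachable state $(s_1,s)$ of $\mathcal{T}_1\|\mathcal{T}$, if $(s_1,(\upsilon,!,\star),s_1')\in R_1$ then there exists a state $s'$ of $\mathcal{T}$ such that $((s_1,s),(\upsilon,!,\star),(s_1',s'))$ belongs to the transition relation of $\mathcal{T}_1\|\mathcal{T}$.
   Context: A channelled transition system (CTS) is a tuple $\mathcal{T}=\langle C,\Sigma,\Upsilon,S,S_0,R,L,\mathsf{ls}\rangle$ where $C$ is a set of channels containing a distinguished broadcast channel $\star$, $\Sigma$ is a state alphabet, $\Upsilon=\Upsilon^+\times\{!,?\}\times C$ for some set $\Upsilon^+$ (a label $(\upsilon,!,c)$ is a send and $(\upsilon,?,c)$ a receive of $\upsilon$ on channel $c$), $S$ is a set of states, $S_0\subseteq S$ the initial states, $R\subseteq S\times\Upsilon\times S$ the transition relation, $L:S\to\Sigma$ a labelling, and $\mathsf{ls}:S\to 2^C$ a listening function with $\star\in\mathsf{ls}(s)$ for all $s$. A state of a CTS is reachable if it lies on a finite sequence $s_0,a_0,s_1,\dots,s_n$ with $s_0\in S_0$ and $(s_j,a_j,s_{j+1})\in R$. The composition of $\mathcal{T}_i=\langle C_i,\Sigma_i,\Upsilon_i,S_i,S_0^i,R_i,L_i,\mathsf{ls}^i\rangle$ ($i=1,2$) is $\mathcal{T}_1\|\mathcal{T}_2=\langle C_1\cup C_2,\Sigma_1\times\Sigma_2,\Upsilon_1\cup\Upsilon_2,S_1\times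 S_2,S_0^1\times S_0^2,R,L,\mathsf{ls}\rangle$ with $L(s_1,s_2)=(L_1(s_1),L_2(s_2))$, $\mathsf{ls}(s_1,s_2)=\mathsf{ls}^1(s_1)\cup\mathsf{ls}^2(s_2)$, and $R$ the union of: (1) triples $((s_1,s_2),(\upsilon,!,c),(s_1',s_2'))$ such that one of: $(s_1,(\upsilon,!,c),s_1')\in R_1$ and $(s_2,(\upsilon,?,c),s_2')\in R_2$; or $(s_1,(\upsilon,?,c),s_1')\in R_1$ and $(s_2,(\upsilon,!,c),s_2')\in R_2$; or $(s_1,(\upsilon,!,c),s_1')\in R_1$, $c\notin\mathsf{ls}^2(s_2)$ and $s_2=s_2'$; or $c\notin\mathsf{ls}^1(s_1)$, $s_1=s_1'$ and $(s_2,(\upsilon,!,c),s_2')\in R_2$; (2) triples $((s_1,s_2),(\upsilon,?,c),(s_1',s_2'))$ such that one of: $(s_1,(\upsilon,?,c),s_1')\in R_1$ and $(s_2,(\upsilon,?,c),s_2')\in R_2$; or $(s_1,(\upsilon,?,c),s_1')\in R_1$, $c\notin\mathsf{ls}^2(s_2)$ and $s_2=s_2'$; or $c\notin\mathsf{ls}^1(s_1)$, $s_1=s_1'$ and $(s_2,(\upsilon,?,c),s_2')\in R_2$; (3) triples $((s_1,s_2),(\upsilon,\gamma,\star),(s_1',s_2'))$ with $\gamma\in\{!,?\}$ such that either $(s_1,(\upsilon,\gamma,\star),s_1')\in R_1$, $s_2=s_2'$ and there is no $s_2''$ with $(s_2,(\upsilon,?,\star),s_2'')\in R_2$; or $s_1=s_1'$,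 there is no $s_1''$ with $(s_1,(\upsilon,?,\star),s_1'')\in R_1$, and $(s_2,(\upsilon,\gamma,\star),s_2')\in R_2$. *)

(* Channelled transition systems over a common universe of
   channels [Ch] (with distinguished broadcast channel [star]) and of
   message values [U] (the carrier of Upsilon^+). *)
From Stdlib Require Import Classical.

Set Implicit Arguments.

Inductive dir : Type := Snd | Rcv.

Section CTSDef.
Variables (Ch U : Type) (star : Ch).

Definition label : Type := (U * dir * Ch)%type.

Record CTS : Type := {
  chans : Ch -> Prop;
  msgs : U -> Prop;
  Sig : Type;
  St : Type;
  init : St -> Prop;
  trans : St -> label -> St -> Prop;
  lab : St -> Sig;
  ls : St -> Ch -> Prop;
  star_in_chans : chans star;
  trans_wf : forall s u d c s', trans s (u, d, c) s' -> msgs u /\ chans c;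
  ls_wf : forall s c, ls s c -> chans c;
  ls_star : forall s, ls s star
}.

Inductive reachable (T : CTS) : St T -> Prop :=
| reach_init : forall s, init T s -> reachable T s
| reach_step : forall s a s', reachable T s -> trans T s a s' -> reachable T s'.

Section Compose.
Variables (T1 T2 : CTS).

Definition comp_trans (p : St T1 * St T2) (a : label) (p' : St T1 * St T2) : Prop :=
  let (s1, s2) := p in let (s1', s2') := p' in
  match a with
  | (v, Snd, c) =>
      (* rule (1) *)
      (trans T1 s1 (v, Snd, c) s1' /\ trans T2 s2 (v, Rcv, c) s2')
   \/ (trans T1 s1 (v, Rcv, c) s1' /\ trans T2 s2 (v, Snd, c) s2')
   \/ (trans T1 s1 (v, Snd, c) s1' /\ ~ ls T2 s2 c /\ s2 = s2')
   \/ (~ ls T1 s1 c /\ s1 = s1' /\ trans T2 s2 (v, Snd, c) s2')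
      (* rule (3), gamma = ! *)
   \/ (c = star /\ trans T1 s1 (v, Snd, star) s1' /\ s2 = s2'
        /\ ~ (exists s2'', trans T2 s2 (v, Rcv, star) s2''))
   \/ (c = star /\ s1 = s1' /\ ~ (exists s1'', trans T1 s1 (v, Rcv, star) s1'')
        /\ trans T2 s2 (v, Snd, star) s2')
  | (v, Rcv, c) =>
      (* rule (2) *)
      (trans T1 s1 (v, Rcv, c) s1' /\ trans T2 s2 (v, Rcv, c) s2')
   \/ (trans T1 s1 (v, Rcv, c) s1' /\ ~ ls T2 s2 c /\ s2 = s2')
   \/ (~ ls T1 s1 c /\ s1 = s1' /\ trans T2 s2 (v, Rcv, c) s2')
      (* rule (3), gamma = ? *)
   \/ (c = star /\ trans T1 s1 (v, Rcv, star) s1' /\ s2 = s2'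
        /\ ~ (exists s2'', trans T2 s2 (v, Rcv, star) s2''))
   \/ (c = star /\ s1 = s1' /\ ~ (exists s1'', trans T1 s1 (v, Rcv, star) s1'')
        /\ trans T2 s2 (v, Rcv, star) s2')
  end.

Lemma comp_star_in_chans : (fun c => chans T1 c \/ chans T2 c) star.
Proof. left; apply star_in_chans. Qed.

Lemma comp_trans_wf : forall p v d c p', comp_trans p (v, d, c) p' ->
  (msgs T1 v \/ msgs T2 v) /\ (chans T1 c \/ chans T2 c).
Proof.
  intros [s1 s2] v d c [s1' s2'] H; destruct d; simpl in H;
  repeat match goal with
  | H : _ \/ _ |- _ => destruct H
  | H : _ /\ _ |- _ => destruct H
  | H : trans T1 _ _ _ |- _ => apply trans_wf in H; destruct H
  | H : trans T2 _ _ _ |- _ => apply trans_wf in H; destruct H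
  end; subst; tauto.
Qed.

Lemma comp_ls_wf : forall (p : St T1 * St T2) c,
  (ls T1 (fst p) c \/ ls T2 (snd p) c) -> chans T1 c \/ chans T2 c.
Proof. intros p c [H|H]; [left|right]; eapply ls_wf; eauto. Qed.

Lemma comp_ls_star : forall (p : St T1 * St T2),
  ls T1 (fst p) star \/ ls T2 (snd p) star.
Proof. intros p; left; apply ls_star. Qed.

Definition compose : CTS := {|
  chans := fun c => chans T1 c \/ chans T2 c;
  msgs := fun v => msgs T1 v \/ msgs T2 v;
  Sig := (Sig T1 * Sig T2)%type;
  St := (St T1 * St T2)%type;
  init := fun p => init T1 (fst p) /\ init T2 (snd p);
  trans := comp_trans;
  lab := fun p => (lab T1 (fst p), lab T2 (snd p));
  ls := fun p c => ls T1 (fst p) c \/ ls T2 (snd p) c;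
  star_in_chans := comp_star_in_chans;
  trans_wf := comp_trans_wf;
  ls_wf := comp_ls_wf;
  ls_star := comp_ls_star
|}.
End Compose.
End CTSDef.

(* Broadcast sends are never blocked: if the partner can receive the message
   on the broadcast channel, the two synchronise by rule (1); if it cannot,
   rule (3) lets the sender move alone.  The case split is classical, and
   reachability plays no role. *)
From Stdlib Require Import Classical.

Section BroadcastSend.
Variables (Ch U : Type) (star : Ch) (T1 T2 : CTS U star).

Lemma comp_trans_send_recv (s1 s1' : St T1) (s2 s2' : St T2) (v : U) (c : Ch) :
  trans T1 s1 (v, Snd, c) s1' -> trans T2 s2 (v, Rcv, c) s2' ->
  trans (compose T1 T2) (s1, s2) (v, Snd, c) (s1', s2').
Proof. intros H1 H2; left; split; assumption. Qed.

Lemma comp_trans_broadcast_unheard (s1 s1' : St T1) (s2 : St T2) (v : U) :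
  trans T1 s1 (v, Snd, star) s1' ->
  ~ (exists s2', trans T2 s2 (v, Rcv, star) s2') ->
  trans (compose T1 T2) (s1, s2) (v, Snd, star) (s1', s2).
Proof. intros H1 Hdeaf; do 4 right; left; tauto. Qed.

Lemma comp_trans_broadcast_send (s1 s1' : St T1) (s2 : St T2) (v : U) :
  trans T1 s1 (v, Snd, star) s1' ->
  exists s2', trans (compose T1 T2) (s1, s2) (v, Snd, star) (s1', s2').
Proof.
  intros H1.
  destruct (classic (exists s2', trans T2 s2 (v, Rcv, star) s2')) as [[s2' H2] | Hdeaf].
  - exists s2'; apply comp_trans_send_recv; assumption.
  - exists s2; apply comp_trans_broadcast_unheard; assumption.
Qed.

End BroadcastSend.

Theorem mainTheorem2 (Ch U : Type) (star : Ch) (T1 T : CTS U star)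
  (s1 : St T1) (s : St T) (v : U) (s1' : St T1) :
  reachable (compose T1 T) (s1, s) ->
  trans T1 s1 (v, Snd, star) s1' ->
  exists s' : St T, trans (compose T1 T) (s1, s) (v, Snd, star) (s1', s').
Proof.
  intros _ Hsend.
  apply comp_trans_broadcast_send; exact Hsend.
Qed.
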